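(* Let $n,m\ge1$ and let $S=\{a_1,\dots,a_n,b_1,\dots,b_m\}$ be the poset whose only strict relations are $a_i<b_j$ for all $i=1,\dots,n$, $j=1,\dots,m$. Then every stochastically monotone generator on $S$ is realizably monotone. *)

From HB Require Import structures.
From mathcomp Require Import all_boot all_order all_algebra.
Set Implicit Arguments. Unset Strict Implicit. Unset Printing Implicit Defensive.
Import Order.TTheory GRing.Theory Num.Theory.
Local Open Scope ring_scope.

Definition is_generator (R : realFieldType) (T : finType) (Q : T -> T -> R) :=
  (forall x y : T, x != y -> 0 <= Q x y) /\ (forall x : T, \sum_(y : T) Q x y = 0).

Definition is_upset (T : finType) (le : rel T) (U : {set T}) :=
  forall x y : T, le x y -> x \in U -> y \in U.

(* Stochastic monotonicity of a generator (Massey's characterisation of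
   monotonicity of the semigroup exp(tQ)): for x <= y and every up-set U
   containing both or neither of x,y, Q(x,U) <= Q(y,U). *)
Definition stoch_monotone_gen (R : realFieldType) (T : finType) (le : rel T)
    (Q : T -> T -> R) :=
  forall (x y : T) (U : {set T}), le x y -> is_upset le U ->
    (x \in U) = (y \in U) ->
    \sum_(z in U) Q x z <= \sum_(z in U) Q y z.

Definition monotone_map (T : finType) (le : rel T) (f : {ffun T -> T}) : bool :=
  [forall x, forall y, le x y ==> le (f x) (f y)].

Definition realizably_monotone_gen (R : realFieldType) (T : finType) (le : rel T)
    (Q : T -> T -> R) :=
  exists c : {ffun T -> T} -> R,
    (forall f, 0 <= c f) /\ (forall f, ~~ monotone_map le f -> c f = 0) /\
    (forall x y : T, x != y -> Q x y = \sum_(f : {ffun T -> T} | f x == y) c f).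

(* The poset S = {a_1..a_n, b_1..b_m}, a_i = inl i, b_j = inr j, whose only
   strict relations are a_i < b_j. *)
Definition bip_le (n m : nat) : rel ('I_n + 'I_m)%type :=
  fun s t => match s, t with
             | inl i, inl i' => i == i'
             | inr j, inr j' => j == j'
             | inl _, inr _ => true
             | inr _, inl _ => false
             end.

From HB Require Import structures.
From mathcomp Require Import all_boot all_order all_algebra.
Set Implicit Arguments. Unset Strict Implicit. Unset Printing Implicit Defensive.
Import Order.TTheory GRing.Theory Num.Theory.
Local Open Scope ring_scope.

(* Realizable generators form a convex cone, so it suffices to split the
   off-diagonal part of Q into three pieces, each a nonnegative combination of
   monotone maps:
   - b-collapses: for a fixed b_k, send every point of {b_1..b_m} and a random
     subset of {a_1..a_n} to b_k; choosing each a_i independently with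
     probability Q(a_i,b_k)/M_k, where M_k = max_i Q(a_i,b_k), and weighting by
     M_k reproduces the rates a_i -> b_k and adds rate M_k to every b_j -> b_k;
   - a-collapses, dually, with N_k = max_j Q(b_j,a_k);
   - single jumps inside one side, with the remaining rates
     Q(b_j,b_k) - M_k and Q(a_i,a_k) - N_k.
   Stochastic monotonicity, tested on the up-sets {b_k} and S \ {a_k}, says
   exactly that these remaining rates are nonnegative. *)

Section Realizability.
Variables (R : realFieldType) (T : finType) (le : rel T).

Lemma realizable_family (I : finType) (w : I -> R) (g : I -> {ffun T -> T})
    (Q : T -> T -> R) :
  (forall t, 0 <= w t) -> (forall t, w t != 0 -> monotone_map le (g t)) ->
  (forall x y, x != y -> Q x y = \sum_(t | g t x == y) w t) ->
  realizably_monotone_gen le Q.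
Proof.
move=> w_ge0 g_mono Qw; exists (fun f => \sum_(t | g t == f) w t).
split; [|split].
- by move=> f; apply: sumr_ge0.
- move=> f f_nmono; apply: big1 => t /eqP gt_f.
  by apply/eqP; apply: contraNT f_nmono => /g_mono; rewrite gt_f.
- move=> x y xy; rewrite Qw // (partition_big g (fun f => f x == y)) //=.
  apply: eq_bigr => f fxy; apply: eq_bigl => t.
  by case: (eqVneq (g t) f) => [->|]; rewrite ?fxy ?andbF.
Qed.

Lemma realizableD (Q1 Q2 : T -> T -> R) :
  realizably_monotone_gen le Q1 -> realizably_monotone_gen le Q2 ->
  realizably_monotone_gen le (fun x y => Q1 x y + Q2 x y).
Proof.
move=> [c1 [c1_ge0 [c1_mono c1Q]]] [c2 [c2_ge0 [c2_mono c2Q]]].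
exists (fun f => c1 f + c2 f); split; [|split].
- by move=> f; rewrite addr_ge0.
- by move=> f f_nmono; rewrite c1_mono ?c2_mono ?addr0.
- by move=> x y xy; rewrite big_split c1Q ?c2Q.
Qed.

Lemma realizable_offdiag_eq (Q1 Q2 : T -> T -> R) :
  (forall x y, x != y -> Q1 x y = Q2 x y) ->
  realizably_monotone_gen le Q1 -> realizably_monotone_gen le Q2.
Proof.
move=> Q12 [c [c_ge0 [c_mono cQ]]]; exists c; do 2!split=> //.
by move=> x y xy; rewrite -Q12 ?cQ.
Qed.

Definition jump (x y : T) : {ffun T -> T} := [ffun z => if z == x then y else z].

Lemma jump_rate (w : T * T -> R) (x y : T) :
  x != y -> \sum_(t | jump t.1 t.2 x == y) w t = w (x, y).
Proof.
move=> xy; rewrite (big_pred1 (x, y)) // => -[u v] /=.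
rewrite ffunE xpair_eqE.
by case: (eqVneq u x) => /= [_|_]; rewrite ?(negbTE xy).
Qed.

Lemma monotone_jump (x y : T) : le y y ->
  (forall z, z != x -> le z x -> le z y) ->
  (forall z, z != x -> le x z -> le y z) ->
  monotone_map le (jump x y).
Proof.
move=> le_yy below above; apply/forallP => u; apply/forallP => v.
apply/implyP; rewrite !ffunE.
by case: (eqVneq u x) => [->|ux]; case: (eqVneq v x) => [->|vx]; auto.
Qed.

End Realizability.

Section SubsetMeasure.

Definition bernoulli_weight (R : pzRingType) (I : finType) (p : I -> R)
    (s : {ffun I -> bool}) : R :=
  \prod_i (if s i then p i else 1 - p i).

Lemma sum_bernoulli_weight (R : comPzRingType) (I : finType) (p : I -> R) :
  \sum_s bernoulli_weight p s = 1.
Proof.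
rewrite /bernoulli_weight -(bigA_distr_bigA (fun i (b : bool) => if b then p i else 1 - p i)).
by apply: big1 => i _; rewrite big_bool /= addrC subrK.
Qed.

Lemma sum_bernoulli_weight_marginal (R : comPzRingType) (I : finType) (p : I -> R) i :
  \sum_(s : {ffun I -> bool} | s i) bernoulli_weight p s = p i.
Proof.
pose F j (b : bool) := if b then p j else if j == i then 0 else 1 - p j.
rewrite big_mkcond (eq_bigr (fun s : {ffun I -> bool} => \prod_j F j (s j))).
  rewrite -bigA_distr_bigA (bigD1 i) //= [X in _ * X]big1 ?mulr1.
    by rewrite big_bool /F eqxx /= addr0.
  by move=> j /negbTE ji; rewrite big_bool /F ji /= addrC subrK.
move=> s _; rewrite /bernoulli_weight (bigD1 i) //= [RHS](bigD1 i) //= /F eqxx.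
case: (s i); rewrite ?mul0r //; congr (_ * _).
by apply: eq_bigr => j /negbTE ->.
Qed.

Lemma bernoulli_weight_ge0 (R : numDomainType) (I : finType) (p : I -> R) s :
  (forall i, 0 <= p i <= 1) -> 0 <= bernoulli_weight p s.
Proof.
move=> p01; apply: prodr_ge0 => i _; have /andP[p_ge0 p_le1] := p01 i.
by case: (s i); rewrite ?subr_ge0.
Qed.

Variables (R : realFieldType) (I : finType) (M : R) (p : I -> R).
Hypothesis M_ge0 : 0 <= M.
Hypothesis p_bounded : forall i, 0 <= p i <= M.

Definition subset_measure (s : {ffun I -> bool}) : R :=
  M * bernoulli_weight (fun i => p i / M) s.

Lemma subset_measure_ge0 s : 0 <= subset_measure s.
Proof.
apply: mulr_ge0 => //; apply: bernoulli_weight_ge0 => i.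
have /andP[p_ge0 p_leM] := p_bounded i.
have [->|M_neq0] := eqVneq M 0; first by rewrite invr0 mulr0 lexx ler01.
have M_gt0 : 0 < M by rewrite lt_def M_neq0.
by rewrite divr_ge0 //= ler_pdivrMr // mul1r.
Qed.

Lemma subset_measure_total : \sum_s subset_measure s = M.
Proof. by rewrite -mulr_sumr sum_bernoulli_weight mulr1. Qed.

Lemma subset_measure_marginal i : \sum_(s : {ffun I -> bool} | s i) subset_measure s = p i.
Proof.
rewrite -mulr_sumr sum_bernoulli_weight_marginal.
have [M0|M_neq0] := eqVneq M 0; last by rewrite mulrCA divff ?mulr1.
by have := p_bounded i; rewrite M0 mul0r -eq_le eq_sym => /eqP.
Qed.

End SubsetMeasure.

Lemma sum_setC1 (V : zmodType) (T : finType) (F : T -> V) (a : T) :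
  \sum_(z in ~: [set a]) F z = \sum_z F z - F a.
Proof.
rewrite [X in _ = X - _](bigD1 a) //= addrC addrK.
by apply: eq_bigl => z; rewrite !inE.
Qed.

Lemma bip_le_refl n m (x : 'I_n + 'I_m) : bip_le x x.
Proof. by case: x => /=. Qed.

Section BipartiteMonotonicity.
Variables (R : realFieldType) (n m : nat) (Q : 'I_n + 'I_m -> 'I_n + 'I_m -> R).
Hypothesis Q_monotone : stoch_monotone_gen (@bip_le n m) Q.

Lemma bip_upset_b (k : 'I_m) : is_upset (@bip_le n m) [set inr k].
Proof. by move=> [i|j] [i'|j'] //=; rewrite !inE // => /eqP <-. Qed.

Lemma bip_upset_setC_a (k : 'I_n) : is_upset (@bip_le n m) (~: [set inl k]).
Proof. by move=> [i|j] [i'|j'] //=; rewrite !inE // => /eqP <-. Qed.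

Lemma bip_monotone_into_b i j k :
  j != k -> Q (inl i) (inr k) <= Q (inr j) (inr k).
Proof.
move=> jk; have := Q_monotone (isT : bip_le (inl i) (inr j)) (bip_upset_b (k := k)).
by rewrite !big_set1 !inE (inj_eq inr_inj) (negbTE jk); apply.
Qed.

Lemma bip_monotone_into_a i j k : (forall x, \sum_y Q x y = 0) ->
  i != k -> Q (inr j) (inl k) <= Q (inl i) (inl k).
Proof.
move=> Q_row ik; have := Q_monotone (isT : bip_le (inl i) (inr j)) (bip_upset_setC_a (k := k)).
rewrite !inE (inj_eq inl_inj) (negbTE ik) => /(_ erefl).
by rewrite !sum_setC1 !Q_row !sub0r lerN2.
Qed.

End BipartiteMonotonicity.

Lemma sum_pair_fst (V : nmodType) (I J : finType) (k : I) (P : pred J)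
    (F : I * J -> V) :
  \sum_(t | (t.1 == k) && P t.2) F t = \sum_(j | P j) F (k, j).
Proof.
pose G i j := if (i == k) && P j then F (i, j) else 0.
rewrite big_mkcond (eq_bigr (fun t => G t.1 t.2)) => [|[] //].
rewrite -pair_bigA (bigD1 k) //= [X in _ + X]big1 ?addr0.
  by rewrite [RHS]big_mkcond; apply: eq_bigr => j _; rewrite /G eqxx.
by move=> i /negbTE ik; apply: big1 => j _; rewrite /G ik.
Qed.

Section BipartiteDecomposition.
Variables (R : realFieldType) (n m : nat) (Q : 'I_n + 'I_m -> 'I_n + 'I_m -> R).
Hypothesis Q_ge0 : forall x y, x != y -> 0 <= Q x y.
Hypothesis Q_into_b : forall i j k, j != k -> Q (inl i) (inr k) <= Q (inr j) (inr k).
Hypothesis Q_into_a : forall i j k, i != k -> Q (inr j) (inl k) <= Q (inl i) (inl k).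

Local Notation S := ('I_n + 'I_m)%type.

Definition max_rate_into_b (k : 'I_m) : R := \big[Order.max/0]_i Q (inl i) (inr k).
Definition max_rate_into_a (k : 'I_n) : R := \big[Order.max/0]_j Q (inr j) (inl k).

Lemma rate_into_b_bounded k i : 0 <= Q (inl i) (inr k) <= max_rate_into_b k.
Proof. by rewrite Q_ge0 // le_bigmax. Qed.

Lemma rate_into_a_bounded k j : 0 <= Q (inr j) (inl k) <= max_rate_into_a k.
Proof. by rewrite Q_ge0 // le_bigmax. Qed.

Definition collapse_into_b (k : 'I_m) (s : {ffun 'I_n -> bool}) : {ffun S -> S} :=
  [ffun z => if z is inl i then (if s i then inr k else z) else inr k].

Definition collapse_into_a (k : 'I_n) (s : {ffun 'I_m -> bool}) : {ffun S -> S} :=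
  [ffun z => if z is inr j then (if s j then inl k else z) else inl k].

Lemma collapse_into_b_monotone k s : monotone_map (@bip_le n m) (collapse_into_b k s).
Proof.
apply/forallP => -[i|j]; apply/forallP => -[i'|j']; apply/implyP; rewrite !ffunE //=.
- by move=> /eqP <-; exact: bip_le_refl.
- by move=> _; case: (s i) => /=.
Qed.

Lemma collapse_into_a_monotone k s : monotone_map (@bip_le n m) (collapse_into_a k s).
Proof.
apply/forallP => -[i|j]; apply/forallP => -[i'|j']; apply/implyP; rewrite !ffunE //=.
- by case: (s j').
- by move=> /eqP <-; exact: bip_le_refl.
Qed.

Lemma collapse_into_b_eq_inr k' s (u : S) k :
  (collapse_into_b k' s u == inr k) = (k' == k) && (if u is inl i then s i else true).
Proof.
rewrite ffunE; case: u => [i|j] /=; last by rewrite (inj_eq inr_inj) andbT.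
by case: (s i); rewrite ?(inj_eq inr_inj) ?andbT ?andbF.
Qed.

Lemma collapse_into_b_eq_inl k s (u : S) i :
  (collapse_into_b k s u == inl i) = (u == inl i) && ~~ s i.
Proof.
rewrite ffunE; case: u => [i'|j] //=; rewrite (inj_eq inl_inj).
by case: (eqVneq i' i) => [->|i'i]; case: (s _); rewrite ?(inj_eq inl_inj) ?eqxx ?(negbTE i'i).
Qed.

Lemma collapse_into_a_eq_inl k' s (u : S) k :
  (collapse_into_a k' s u == inl k) = (k' == k) && (if u is inr j then s j else true).
Proof.
rewrite ffunE; case: u => [i|j] /=; first by rewrite (inj_eq inl_inj) andbT.
by case: (s j); rewrite ?(inj_eq inl_inj) ?andbT ?andbF.
Qed.

Lemma collapse_into_a_eq_inr k s (u : S) j :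
  (collapse_into_a k s u == inr j) = (u == inr j) && ~~ s j.
Proof.
rewrite ffunE; case: u => [i|j'] //=; rewrite (inj_eq inr_inj).
by case: (eqVneq j' j) => [->|j'j]; case: (s _); rewrite ?(inj_eq inr_inj) ?eqxx ?(negbTE j'j).
Qed.

Definition collapse_b_weight (t : 'I_m * {ffun 'I_n -> bool}) : R :=
  subset_measure (max_rate_into_b t.1) (fun i => Q (inl i) (inr t.1)) t.2.

Definition collapse_a_weight (t : 'I_n * {ffun 'I_m -> bool}) : R :=
  subset_measure (max_rate_into_a t.1) (fun j => Q (inr j) (inl t.1)) t.2.

Lemma collapse_b_weight_ge0 t : 0 <= collapse_b_weight t.
Proof. by apply: subset_measure_ge0 => [|i]; rewrite ?bigmax_ge_id ?rate_into_b_bounded. Qed.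

Lemma collapse_a_weight_ge0 t : 0 <= collapse_a_weight t.
Proof. by apply: subset_measure_ge0 => [|j]; rewrite ?bigmax_ge_id ?rate_into_a_bounded. Qed.

Lemma collapse_b_rate_inr (u : S) k :
  \sum_(t | collapse_into_b t.1 t.2 u == inr k) collapse_b_weight t
  = if u is inl _ then Q u (inr k) else max_rate_into_b k.
Proof.
rewrite (eq_bigl _ _ (fun t => collapse_into_b_eq_inr t.1 t.2 u k)).
rewrite (sum_pair_fst _ (fun s : {ffun _ -> bool} => if u is inl i then s i else true)).
rewrite /collapse_b_weight /=; case: u => [i|j]; last exact: subset_measure_total.
by apply: subset_measure_marginal => i'; apply: rate_into_b_bounded.
Qed.

Lemma collapse_a_rate_inl (u : S) k :
  \sum_(t | collapse_into_a t.1 t.2 u == inl k) collapse_a_weight t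
  = if u is inr _ then Q u (inl k) else max_rate_into_a k.
Proof.
rewrite (eq_bigl _ _ (fun t => collapse_into_a_eq_inl t.1 t.2 u k)).
rewrite (sum_pair_fst _ (fun s : {ffun _ -> bool} => if u is inr j then s j else true)).
rewrite /collapse_a_weight /=; case: u => [i|j]; first exact: subset_measure_total.
by apply: subset_measure_marginal => j'; apply: rate_into_a_bounded.
Qed.

Lemma collapse_b_rate_inl (u : S) i : u != inl i ->
  \sum_(t | collapse_into_b t.1 t.2 u == inl i) collapse_b_weight t = 0.
Proof. by move=> ui; apply: big_pred0 => t; rewrite collapse_into_b_eq_inl (negbTE ui). Qed.

Lemma collapse_a_rate_inr (u : S) j : u != inr j ->
  \sum_(t | collapse_into_a t.1 t.2 u == inr j) collapse_a_weight t = 0.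
Proof. by move=> uj; apply: big_pred0 => t; rewrite collapse_into_a_eq_inr (negbTE uj). Qed.

Definition same_side_residual (t : S * S) : R :=
  match t with
  | (inl i, inl k) => if i == k then 0 else Q (inl i) (inl k) - max_rate_into_a k
  | (inr j, inr k) => if j == k then 0 else Q (inr j) (inr k) - max_rate_into_b k
  | _ => 0
  end.

Lemma same_side_residual_ge0 t : 0 <= same_side_residual t.
Proof.
case: t => -[i|j] [k|k] //=; have [//|ne] := eqVneq; rewrite subr_ge0.
- by apply: bigmax_le => [|j _]; [apply: Q_ge0 | apply: Q_into_a].
- by apply: bigmax_le => [|i _]; [apply: Q_ge0 | apply: Q_into_b].
Qed.

Lemma bip_jump_monotone (x y : S) :
  same_side_residual (x, y) != 0 -> monotone_map (@bip_le n m) (jump x y).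
Proof.
move=> residual_neq0; apply: monotone_jump; first exact: bip_le_refl.
all: case: x y residual_neq0 => [i|j] [k|k] /=; rewrite ?eqxx // => _ [i'|j'] //=.
all: by move=> /negP ne /eqP eq; case: ne; rewrite eq.
Qed.

Lemma bip_rate_decomposition (u v : S) : u != v ->
  Q u v = same_side_residual (u, v)
          + \sum_(t | collapse_into_b t.1 t.2 u == v) collapse_b_weight t
          + \sum_(t | collapse_into_a t.1 t.2 u == v) collapse_a_weight t.
Proof.
case: v => [k|k] uv; rewrite ?collapse_b_rate_inr ?collapse_a_rate_inl
  ?collapse_b_rate_inl ?collapse_a_rate_inr //; case: u uv => [i|j] uv //=.
all: rewrite ?addr0 ?add0r //; move: uv.
- by rewrite (inj_eq inl_inj) => /negbTE ->; rewrite subrK.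
- by rewrite (inj_eq inr_inj) => /negbTE ->; rewrite subrK.
Qed.

Lemma bip_realizable : realizably_monotone_gen (@bip_le n m) Q.
Proof.
have jumps : realizably_monotone_gen (@bip_le n m) (fun u v => same_side_residual (u, v)).
  apply: (realizable_family (g := fun t => jump t.1 t.2)) => [t|[x y]|x y xy].
  - exact: same_side_residual_ge0.
  - exact: bip_jump_monotone.
  - by rewrite jump_rate.
have collapses_b : realizably_monotone_gen (@bip_le n m)
    (fun u v => \sum_(t | collapse_into_b t.1 t.2 u == v) collapse_b_weight t).
  apply: realizable_family => [t|t _|//].
  - exact: collapse_b_weight_ge0.
  - exact: collapse_into_b_monotone.
have collapses_a : realizably_monotone_gen (@bip_le n m)
    (fun u v => \sum_(t | collapse_into_a t.1 t.2 u == v) collapse_a_weight t).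
  apply: realizable_family => [t|t _|//].
  - exact: collapse_a_weight_ge0.
  - exact: collapse_into_a_monotone.
apply: realizable_offdiag_eq (realizableD (realizableD jumps collapses_b) collapses_a).
by move=> u v uv; rewrite -bip_rate_decomposition.
Qed.

End BipartiteDecomposition.

Unset Implicit Arguments.

Theorem mainTheorem12 (R : realFieldType) (n m : nat) (hn : (0 < n)%N) (hm : (0 < m)%N)
  (Q : ('I_n + 'I_m)%type -> ('I_n + 'I_m)%type -> R) :
  is_generator Q -> stoch_monotone_gen (@bip_le n m) Q ->
  realizably_monotone_gen (@bip_le n m) Q.
Proof.
move=> [Q_ge0 Q_row] Q_monotone.
apply: (bip_realizable Q_ge0) => i j k.
- exact: bip_monotone_into_b.
- exact: bip_monotone_into_a.
Qed.
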